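(* Let $G$ be a twin-free unit square graph, let $\mathcal{P}$ be a clique-stable partition of $V(G)$, and let $f$ be a realization of $G$. Then: (1) For each $X\in\mathcal{P}$ there is $b\in\{-1,1\}$ such that for all $v,w\in X$: $f(v)_1\le f(w)_1 \iff b\,f(v)_2\le b\,f(w)_2$. Call such $b$ the orientation $\mathrm{ori}_{G,f}(X)$ (it is unique if $|X|\ge2$; set $\mathrm{ori}_{G,f}(X)=1$ if $|X|=1$). (2) If $X,Y\in\mathcal{P}$ with $\mathrm{ori}_{G,f}(X)\ne\mathrm{ori}_{G,f}(Y)$, then either $xy\in E(G)$ for all $x\in X,y\in Y$, or $xy\notin E(G)$ for all $x\in X,y\in Y$. (3) Let $X\ne Y\in\mathcal{P}$ with $\mathrm{ori}_{G,f}(X)=\mathrm{ori}_{G,f}(Y)$ and let $k=|\{(x,y)\in X\times Y\mid xy\in E(G)\}|\ge1$. Write $X=\{x_1,\dots,x_s\}$ with $f(x_i)_1\le f(x_{i+1})_1$ for all $i<s$ and $Y=\{y_1,\dots,y_t\}$ with $f(y_j)_1\le f(y_{j+1})_1$ for all $j<t$. Then for all $i\in[s],j\in[t]$: $x_iy_j\in E(G)\iff \lceil it/k\rceil=\lceil js/k\rceil$.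
   Context: A realization of $G$ is $f\colon V(G)\to\mathbb{R}^2$ with $vw\in E(G)$ iff $\|f(v)-f(w)\|_\infty\le1$ for distinct $v,w$; a unit square graph is a graph with a realization. $G$ is twin-free if there are no distinct $v,w$ with $N[v]=N[w]$. $\mathcal{M}(G)$ is the set of maximal cliques. $G^*_{\mathcal{M}}$ is the graph on $V(G)\sqcup\mathcal{M}(G)$ with edge set $E(G)\cup\{vC\mid C\in\mathcal{M}(G),v\in C\}$. A partition $\mathcal{Q}$ of the vertex set of a graph $H$ is stable if for all $X,Y\in\mathcal{Q}$ and $v,w\in X$, $|N_H(v)\cap Y|=|N_H(w)\cap Y|$. A partition $\mathcal{P}$ of $V(G)$ into cliques is clique-stable if, letting $\mathcal{P}^*$ be the coarsest partition of $V(G)\cup\mathcal{M}(G)$ that is stable with respect to $G^*_{\mathcal{M}}$ and refines $\mathcal{P}\cup\{\mathcal{M}(G)\}$, one has $\{Z\in\mathcal{P}^*\mid Z\subseteq V(G)\}=\mathcal{P}$. *)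

From HB Require Import structures.
From mathcomp Require Import all_boot.
From Stdlib Require Import Reals.
Set Implicit Arguments. Unset Strict Implicit. Unset Printing Implicit Defensive.

Section UnitSquare.
Variable T : finType.
Variable e : rel T.

Definition simple_graph : Prop := symmetric e /\ irreflexive e.

Definition closed_nbhd (v : T) : {set T} := [set w | (w == v) || e v w].

Definition twin_free : Prop :=
  forall v w : T, closed_nbhd v = closed_nbhd w -> v = w.

Definition cliqueb (C : {set T}) : bool :=
  [forall x in C, forall y in C, (x != y) ==> e x y].

Definition maxcliqueb (C : {set T}) : bool :=
  cliqueb C && [forall D : {set T}, (cliqueb D && (C \subset D)) ==> (D == C)].

(* The graph G*_M on V(G) ⊔ M(G), encoded inside the type T + {set T}. *)
Definition starT : finType := (T + {set T})%type.

Definition starV : {set starT} :=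
  [set u : starT | match u with inl _ => true | inr C => maxcliqueb C end].

Definition starE (u w : starT) : bool :=
  match u, w with
  | inl v, inl x => e v x
  | inl v, inr C => (v \in C) && maxcliqueb C
  | inr C, inl v => (v \in C) && maxcliqueb C
  | inr _, inr _ => false
  end.

Definition stable (Q : {set {set starT}}) : Prop :=
  forall X Y, X \in Q -> Y \in Q -> forall v w, v \in X -> w \in X ->
    #|[set u in Y | starE v u]| = #|[set u in Y | starE w u]|.

Definition refines (Q Q' : {set {set starT}}) : Prop :=
  forall X, X \in Q -> exists2 Y, Y \in Q' & X \subset Y.

Definition inl_block (X : {set T}) : {set starT} := [set (inl x : starT) | x in X].

Definition Mblock : {set starT} :=
  [set (inr C : starT) | C in [set C : {set T} | maxcliqueb C]].

Definition Pinit (P : {set {set T}}) : {set {set starT}} :=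
  (inl_block @: P) :|: [set Mblock].

Definition coarsest_stable_refinement (Pst : {set {set starT}}) (P : {set {set T}}) : Prop :=
  [/\ partition Pst starV, stable Pst, refines Pst (Pinit P) &
      forall Q, partition Q starV -> stable Q -> refines Q (Pinit P) -> refines Q Pst].

Definition clique_partition (P : {set {set T}}) : Prop :=
  partition P [set: T] /\ forall X, X \in P -> cliqueb X.

Definition clique_stable (P : {set {set T}}) : Prop :=
  clique_partition P /\
  exists Pst, coarsest_stable_refinement Pst P /\
    [set Z in Pst | Z \subset inl_block [set: T]] = inl_block @: P.

Definition realization (f : T -> (R * R)%type) : Prop :=
  forall v w : T, v != w ->
    (e v w <-> Rle (Rmax (Rabs (Rminus (f v).1 (f w).1))
                         (Rabs (Rminus (f v).2 (f w).2))) R1).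

End UnitSquare.

Definition is_orientation (T : finType) (f : T -> (R * R)%type) (X : {set T}) (b : R) : Prop :=
  (b = R1 \/ b = Ropp R1) /\
  forall v w, v \in X -> w \in X ->
    (Rle (f v).1 (f w).1 <-> Rle (Rmult b (f v).2) (Rmult b (f w).2)).

Definition ori_spec (T : finType) (f : T -> (R * R)%type) (X : {set T}) (b : R) : Prop :=
  is_orientation f X b /\ (#|X| <= 1 -> b = R1).

(* ceil(a / k) for k >= 1 *)
Definition ceil_div (a k : nat) : nat := (a + k.-1) %/ k.

(* Blocks of a clique-stable partition are cliques, and all vertices of a block X have the
   same number of neighbours in any other block Y.  In a realization every block spans at most 1
   in each coordinate, so for blocks X <> Y there is a sign b such that two vertices of X which
   are comparable for the order "first coordinate, then b times the second" have the same
   neighbours in Y: moving up along this order can only gain neighbours, and the numbers agree.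
   Twin-freeness separates distinct vertices of X by some block, which forces all pairs of X to
   be comparable for one sign, the orientation (1).  The vertices of a block are comparable for
   its own orientation, so opposite orientations make all vertices of X see the same part of Y,
   which by the degree counts is all of Y or nothing (2).  For equal orientations, listing X and
   Y by first coordinate, the bipartite adjacency matrix is monotone and row-convex with
   constant row sums d_X and column sums d_Y; such a staircase is the matrix with
   x_i ~ y_j iff i / d_Y = j / d_X (0-based, integer division), and k = |X| d_X = |Y| d_Y turns
   this into the ceiling formula (3). *)

From mathcomp Require Import all_boot zify.
From Stdlib Require Import Reals Lra Lia Classical.
Set Implicit Arguments. Unset Strict Implicit. Unset Printing Implicit Defensive.

(** * Signs, nearness and orientations in the plane *)

Definition unit_sign (b : R) : Prop := b = R1 \/ b = Ropp R1.

Lemma unit_signN b : unit_sign b -> unit_sign (Ropp b).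
Proof. by case=> ->; [right | left; rewrite Ropp_involutive]. Qed.

Lemma unit_sign_either b b1 b2 : unit_sign b -> unit_sign b1 -> unit_sign b2 -> b1 <> b2 ->
  b = b1 \/ b = b2.
Proof. by do 3![case=> ->]; move=> neq; auto; case: neq. Qed.

Lemma unit_sign_neqN b : unit_sign b -> b <> Ropp b.
Proof. by case=> -> E; lra. Qed.

Section PlaneOrder.
Local Open Scope R_scope.

Definition near (p q : R * R) : Prop :=
  -1 <= p.1 - q.1 <= 1 /\ -1 <= p.2 - q.2 <= 1.

Definition ordered (b : R) (p q : R * R) : Prop := p.1 <= q.1 /\ b * p.2 <= b * q.2.

Definition comparable (b : R) (p q : R * R) : Prop := ordered b p q \/ ordered b q p.

Lemma Rmax_abs_le1 u v : Rmax (Rabs u) (Rabs v) <= 1 <-> -1 <= u <= 1 /\ -1 <= v <= 1.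
Proof.
split=> [uv_le1 | [u_le1 v_le1]]; last by apply: Rmax_lub; apply: Rabs_le; lra.
have := Rle_trans _ _ _ (Rmax_l _ _) uv_le1; have := Rle_trans _ _ _ (Rmax_r _ _) uv_le1.
have := Rle_abs u; have := Rle_abs (- u); have := Rle_abs v; have := Rle_abs (- v).
rewrite !Rabs_Ropp; lra.
Qed.

Lemma comparable_refl b p : comparable b p p.
Proof. by left; split; apply: Rle_refl. Qed.

Lemma comparable_or_opp b p q : comparable b p q \/ comparable (- b) p q.
Proof.
rewrite /comparable /ordered.
case: (Rle_or_lt p.1 q.1) => h1; case: (Rle_or_lt (b * p.2) (b * q.2)) => h2.
- by left; left.
- by right; left; split; lra.
- by right; right; split; lra.
- by left; right; split; lra.
Qed.

Lemma near_corner b p p' q q' : unit_sign b ->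
  ordered b p p' -> ordered b q q' -> near p q' -> near p' q -> near p q.
Proof. by rewrite /near /ordered => - [] -> *; lra. Qed.

Lemma near_convex b p q q' q'' : unit_sign b ->
  ordered b q q' -> ordered b q' q'' -> near p q -> near p q'' -> near p q'.
Proof. by rewrite /near /ordered => - [] -> *; lra. Qed.

Lemma unit_sign_side (T : finType) (A B : {set T}) (h : T -> R) :
  {in A &, forall a a', h a - h a' <= 1} -> {in B &, forall c c', h c - h c' <= 1} ->
  exists2 s, unit_sign s & {in A & B, forall a c, s * (h a - h c) <= 1}.
Proof.
move=> diamA diamB.
case: (classic (exists a0 c0, [/\ a0 \in A, c0 \in B & 1 < h a0 - h c0])).
  move=> [a0 [c0 [a0A c0B gap]]]; exists (Ropp R1); first by right.
  by move=> a c aA cB; have := diamA a0 a a0A aA; have := diamB c c0 cB c0B; lra.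
move=> nogap; exists R1; first by left.
move=> a c aA cB; rewrite Rmult_1_l; apply: Rnot_lt_le => gap.
by apply: nogap; exists a, c.
Qed.

Section Orientation.
Variables (T : finType) (g : T -> R * R) (X : {set T}).

Lemma orientation_ordered b x x' : is_orientation g X b -> x \in X -> x' \in X ->
  (g x).1 <= (g x').1 -> ordered b (g x) (g x').
Proof. by move=> [_ ori] xX x'X le1; split; last exact: (proj1 (ori _ _ xX x'X)). Qed.

Lemma orientation_comparable b x x' :
  is_orientation g X b -> x \in X -> x' \in X -> comparable b (g x) (g x').
Proof.
move=> ori xX x'X; case: (Rle_or_lt (g x).1 (g x').1) => [le1 | lt1].
  by left; apply: orientation_ordered.
by right; apply: orientation_ordered => //; lra.
Qed.

Lemma comparable_orientation b :
  unit_sign b -> {in X &, forall x x', comparable b (g x) (g x')} ->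
  {in X &, forall x x', comparable (- b) (g x) (g x') -> x = x'} ->
  is_orientation g X b.
Proof.
move=> sign_b cmp cmp_opp_eq; split=> // x x' xX x'X.
case: (classic (comparable (- b) (g x) (g x'))) => [/cmp_opp_eq <- // | ncmp].
  by split=> _; apply: Rle_refl.
case: (cmp x x' xX x'X) => [[h1 h2] | [h1 h2]]; split=> h //.
- by apply: Rnot_lt_le => lt2; apply: ncmp; left; split; lra.
- by apply: Rnot_lt_le => lt1; apply: ncmp; right; split; lra.
Qed.

Lemma orientation_opp_eq b b' x x' :
  is_orientation g X b -> is_orientation g X b' -> b <> b' ->
  x \in X -> x' \in X -> g x = g x'.
Proof.
move=> [sign_b ori] [sign_b' ori'] neq_bb' xX x'X.
have Eb' : b' = - b.
  by case: sign_b sign_b' neq_bb' => -> [] -> neq //; first [lra | case: neq].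
subst b'.
wlog le1 : x x' xX x'X / (g x).1 <= (g x').1.
  by move=> wlog_le1; case: (Rle_or_lt (g x).1 (g x').1) => h;
    [apply: wlog_le1 | symmetry; apply: wlog_le1 => //; lra].
have le2 := proj1 (ori _ _ xX x'X) le1.
have ge2 := proj1 (ori' _ _ xX x'X) le1.
have ge1 := proj2 (ori _ _ x'X xX) ltac:(lra).
rewrite [g x]surjective_pairing [g x']surjective_pairing.
by case: sign_b le2 ge2 => -> le2 ge2; f_equal; lra.
Qed.
End Orientation.
End PlaneOrder.

(** * Counting in integer intervals and staircases *)

Lemma sub_in_count (T : eqType) (a1 a2 : pred T) (s : seq T) :
  {in s, subpred a1 a2} -> count a1 s <= count a2 s.
Proof.
move=> sub12; have -> : count a1 s = count (predI a1 a2) s.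
  by apply: eq_in_count => x /sub12 /=; case: (a1 x) => // ->.
by apply: sub_count => x /= /andP[].
Qed.

Lemma count_iota_interval a b n : a <= b <= n ->
  count (fun x => a <= x < b) (iota 0 n) = b - a.
Proof.
case/andP=> le_ab le_bn.
have -> : iota 0 n = iota 0 a ++ iota a (b - a) ++ iota b (n - b).
  rewrite -[X in iota X (n - b)](subnKC le_ab) -iotaD -[X in iota X (_ + _)]add0n -iotaD.
  by rewrite addnA !subnKC // (leq_trans le_ab).
rewrite !count_cat (@eq_in_count _ _ pred0 (iota 0 a)) ?count_pred0; last first.
  by move=> x; rewrite mem_iota /= => ltxa; rewrite leqNgt ltxa.
rewrite (@eq_in_count _ _ pred0 (iota b _)) ?count_pred0; last first.
  by move=> x; rewrite mem_iota subnKC // => /andP[lebx _]; rewrite ltnNge lebx andbF.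
rewrite (@eq_in_count _ _ predT) ?count_predT ?size_iota ?addn0 //.
by move=> x; rewrite mem_iota subnKC.
Qed.

Lemma divn_eqE x d q : 0 < d -> (x %/ d == q) = (q * d <= x < q.+1 * d).
Proof. by move=> d_gt0; rewrite eqn_leq -ltnS ltn_divLR // leq_divRL // andbC. Qed.

Lemma count_iota_div n d q : 0 < d ->
  count (fun x => x %/ d == q) (iota 0 n) = minn (q.+1 * d) n - minn (q * d) n.
Proof.
move=> d_gt0; rewrite -(@count_iota_interval _ _ n); last first.
  by rewrite geq_minr andbT leq_min geq_minr andbT geq_min leq_mul2r leqnSn orbT.
apply: eq_in_count => x; rewrite mem_iota add0n /= => ltxn.
by rewrite divn_eqE // geq_min leq_min; case: ltnP ltxn => // _ _; rewrite andbT orbF.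
Qed.

Lemma count_convex_interval (Q : pred nat) n c :
  (forall j, j < n -> Q j -> c <= j) ->
  (forall j j', c <= j <= j' -> j' < n -> Q j' -> Q j) ->
  forall j, j < n -> Q j = (c <= j < c + count Q (iota 0 n)).
Proof.
move=> lbQ convQ j ltjn; apply/idP/idP => [Qj | /andP[le_cj ltj]].
  have le_cj := lbQ _ ltjn Qj; rewrite le_cj /= -ltn_subLR // -subSn //.
  rewrite -(@count_iota_interval c j.+1 n); last by rewrite leqW.
  apply: sub_in_count => x; rewrite mem_iota => /andP[_ ltxn] /andP[le_cx ltxj].
  by apply: (convQ x j) => //; rewrite le_cx -ltnS.
apply/negPn/negP => nQj; move: ltj; apply/negP; rewrite -leqNgt -leq_subRL //.
rewrite -(@count_iota_interval c j n); last by rewrite le_cj ltnW.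
apply: sub_in_count => x; rewrite mem_iota /= => ltxn Qx.
rewrite lbQ //= ltnNge; apply: contra nQj => le_jx.
by apply: (convQ j x) => //; rewrite le_cj.
Qed.

Section Staircase.
Variables (s t dX dY : nat) (E : nat -> nat -> bool).
Hypotheses (dX_gt0 : 0 < dX) (dY_gt0 : 0 < dY).
Hypothesis row_count : forall i, i < s -> count (E i) (iota 0 t) = dX.
Hypothesis col_count : forall j, j < t -> count (E^~ j) (iota 0 s) = dY.
Hypothesis corner : forall i i' j j', i <= i' -> i' < s -> j <= j' -> j' < t ->
  E i j' -> E i' j -> E i j.
Hypothesis row_convex : forall i j j' j'', i < s -> j <= j' <= j'' -> j'' < t ->
  E i j -> E i j'' -> E i j'.

Section Row.
Variable i : nat.
Hypothesis lt_is : i < s.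
Hypothesis rows_below : forall i' j, i' < i -> j < t -> E i' j = (i' %/ dY == j %/ dX).

Lemma count_col_from j : j < t ->
  count (E^~ j) (iota i (s - i)) = dY - count (fun x => x %/ dY == j %/ dX) (iota 0 i).
Proof.
move=> ltjt; have := col_count ltjt.
rewrite -[X in iota 0 X](subnKC (ltnW lt_is)) iotaD count_cat add0n => count_split.
have below : count (E^~ j) (iota 0 i) = count (fun x => x %/ dY == j %/ dX) (iota 0 i).
  by apply: eq_in_count => x; rewrite mem_iota /= => ltxi; apply: rows_below.
by rewrite -{1}count_split below addKn.
Qed.

Lemma not_adj_before_block j : j < t -> j %/ dX < i %/ dY -> ~~ E i j.
Proof.
move=> ltjt lt_ji; have := count_col_from ltjt; rewrite count_iota_div //.
have le_i : (j %/ dX).+1 * dY <= i.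
  by apply: leq_trans (leq_divM i dY); rewrite leq_mul2r lt_ji orbT.
rewrite (minn_idPl le_i) (minn_idPl (leq_trans _ le_i)) ?leq_mul2r ?leqnSn ?orbT //.
rewrite mulSn addnK subnn => /eqP; apply: contraTN => Eij.
by rewrite -lt0n -has_count; apply/hasP; exists i; rewrite // mem_iota leqnn subnKC // ltnW.
Qed.

Lemma adj_block_start : (i %/ dY * dX < t) /\ E i (i %/ dY * dX).
Proof.
have /hasP[j1] : has (E i) (iota 0 t) by rewrite has_count row_count.
rewrite mem_iota add0n => /andP[_ ltj1t] Eij1.
have le_cj1 : i %/ dY * dX <= j1.
  by rewrite -leq_divRL // leqNgt; apply: contraL Eij1; apply: not_adj_before_block.
have ltct := leq_ltn_trans le_cj1 ltj1t; split=> //.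
have := count_col_from ltct; rewrite count_iota_div // mulnK //.
rewrite (minn_idPr (ltnW (ltn_ceil _ dY_gt0))) (minn_idPl (leq_divM _ _)) => count_c.
have : 0 < dY - (i - i %/ dY * dY).
  by rewrite subn_gt0 ltn_subLR ?leq_divM // addnC -mulSn ltn_ceil.
rewrite -count_c -has_count => /hasP[a].
rewrite mem_iota (subnKC (ltnW lt_is)) => /andP[le_ia ltas] Eac.
exact: (corner le_ia ltas le_cj1 ltj1t Eij1 Eac).
Qed.

Lemma staircase_row j : j < t -> E i j = (i %/ dY == j %/ dX).
Proof.
have [ltct Eic] := adj_block_start.
have lb j' : j' < t -> E i j' -> i %/ dY * dX <= j'.
  move=> ltj't Eij'; rewrite -leq_divRL // leqNgt.
  by apply: contraL Eij'; apply: not_adj_before_block.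
have conv j' j'' : i %/ dY * dX <= j' <= j'' -> j'' < t -> E i j'' -> E i j'.
  by move=> bounds ltj''t; apply: (row_convex lt_is bounds ltj''t Eic).
move=> ltjt; rewrite (count_convex_interval lb conv ltjt) row_count // eq_sym divn_eqE //.
by rewrite mulSn addnC.
Qed.

End Row.

Lemma staircase i j : i < s -> j < t -> E i j = (i %/ dY == j %/ dX).
Proof.
elim/ltn_ind: i j => i IH j lt_is; apply: staircase_row => // i' j' lt_i'i ltj't.
by apply: IH => //; apply: ltn_trans lt_is.
Qed.
End Staircase.

Lemma ceil_div_mul i t d : 0 < t -> 0 < d -> ceil_div (i.+1 * t) (t * d) = (i %/ d).+1.
Proof.
move=> t_gt0 d_gt0; rewrite /ceil_div.
have lt_mod := ltn_pmod i d_gt0; move: (divn_eq i d) lt_mod.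
move: (i %/ d) (i %% d) => q r -> lt_rd.
have -> : (q * d + r).+1 * t + (t * d).-1 = q.+1 * (t * d) + (r.+1 * t).-1 by nia.
by rewrite divnMDl ?muln_gt0 ?t_gt0 // divn_small ?addn0 //; nia.
Qed.

Section Enumeration.
Variables (T : finType) (X : {set T}) (xs : 'I_#|X| -> T) (x0 : T).
Hypotheses (xs_inj : injective xs) (xs_in : forall i, xs i \in X).

(* [xs] extended to all of [nat] by the junk value [x0], so that indices are plain naturals. *)
Definition ext_ord (m : nat) : T := oapp xs x0 (insub m).

Lemma ext_ordE (i : 'I_#|X|) : ext_ord i = xs i.
Proof. by rewrite /ext_ord valK. Qed.

Lemma ext_ord_mem m : m < #|X| -> ext_ord m \in X.
Proof. by move=> ltmX; rewrite -[m]/(val (Ordinal ltmX)) ext_ordE. Qed.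

Lemma ext_ord_mono (g : T -> R) :
  (forall i i' : 'I_#|X|, nat_of_ord i' = (nat_of_ord i).+1 -> Rle (g (xs i)) (g (xs i'))) ->
  forall m m', m <= m' -> m' < #|X| -> Rle (g (ext_ord m)) (g (ext_ord m')).
Proof.
move=> step m m' le_mm'; rewrite -(subnKC le_mm').
elim: (m' - m) => [|k IHk] ltkX; first by rewrite addn0; apply: Rle_refl.
have ltk : m + k < #|X| by apply: ltn_trans ltkX; rewrite addnS.
apply: Rle_trans (IHk ltk) _.
rewrite -[m + k]/(val (Ordinal ltk)) -[m + k.+1]/(val (Ordinal ltkX)) !ext_ordE.
by apply: step; rewrite /= addnS.
Qed.

Lemma ext_ord_ordered (g : T -> R * R) b : is_orientation g X b ->
  (forall i i' : 'I_#|X|, nat_of_ord i' = (nat_of_ord i).+1 -> Rle (g (xs i)).1 (g (xs i')).1) ->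
  forall m m', m <= m' -> m' < #|X| -> ordered b (g (ext_ord m)) (g (ext_ord m')).
Proof.
move=> ori step m m' le_mm' ltm'X.
apply: (orientation_ordered ori (ext_ord_mem (leq_ltn_trans le_mm' ltm'X)) (ext_ord_mem ltm'X)).
exact: (ext_ord_mono (g := fun z => (g z).1) step le_mm' ltm'X).
Qed.

Lemma card_ext_ord (Q : pred T) : #|[set x in X | Q x]| = count (Q \o ext_ord) (iota 0 #|X|).
Proof.
have im_xs : xs @: setT = X.
  apply/eqP; rewrite eqEcard card_imset // cardsT card_ord leqnn andbT.
  by apply/subsetP => _ /imsetP[i _ ->].
have -> : [set x in X | Q x] = xs @: [set i | Q (xs i)].
  apply/setP => x; rewrite [in LHS]inE.
  have -> : (x \in X) = (x \in xs @: setT) by rewrite im_xs.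
  apply/andP/imsetP => [[/imsetP[i _ ->] Qx] | [i]].
    by exists i; rewrite ?inE.
  by rewrite inE => Qxi ->; rewrite imset_f.
rewrite card_imset // -val_enum_ord count_map cardE /enum_mem size_filter count_filter.
by apply: eq_count => i; rewrite /= inE ext_ordE andbT.
Qed.

End Enumeration.

(** * Clique-stable partitions and their realizations *)

Section Graph.
Variables (T : finType) (e : rel T).

Definition nbhs_in (Y : {set T}) (x : T) : {set T} := [set y in Y | e x y].

Definition edge_set (X Y : {set T}) : {set T * T} :=
  [set p | [&& p.1 \in X, p.2 \in Y & e p.1 p.2]].

Lemma in_edge_set X Y x y : ((x, y) \in edge_set X Y) = [&& x \in X, y \in Y & e x y].
Proof. by rewrite inE. Qed.

Lemma card_edge_set_rows (X Y : {set T}) d : {in X, forall x, #|nbhs_in Y x| = d} ->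
  #|edge_set X Y| = #|X| * d.
Proof.
move=> degX; rewrite -sum1_card (partition_big (fun p : T * T => p.1) (mem X)); last first.
  by move=> -[x y]; rewrite in_edge_set => /and3P[].
rewrite -sum_nat_const; apply: eq_bigr => x xX; rewrite sum1_card -(degX x xX).
have pair_inj : injective (@pair T T x) by move=> y y' [].
rewrite -(card_imset _ pair_inj); apply: eq_card => -[x' y].
rewrite unfold_in /= in_edge_set.
apply/andP/imsetP => [[/and3P[_ yY adj] /eqP Ex'] | [y' Ny' [-> ->]]].
  by rewrite -Ex'; exists y; rewrite // inE yY.
by move: Ny'; rewrite inE => /andP[-> ->]; rewrite !andbT eqxx.
Qed.

Lemma card_edge_set_cols (X Y : {set T}) d : symmetric e -> {in Y, forall y, #|nbhs_in X y| = d} ->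
  #|edge_set X Y| = #|Y| * d.
Proof.
move=> e_sym degY; rewrite -(card_edge_set_rows degY).
have swapK : involutive (fun p : T * T => (p.2, p.1)) by case.
rewrite -(card_imset _ (inv_inj swapK)); apply: eq_card => -[x y].
rewrite in_edge_set; apply/imsetP/and3P => [[[x' y'] + [-> ->]] | [xY yX adj]].
  by rewrite in_edge_set => /and3P[-> -> adj]; rewrite e_sym.
by exists (y, x); rewrite // in_edge_set yX xY e_sym.
Qed.

Section Realization.
Variable f : T -> R * R.
Hypothesis f_real : realization e f.

Lemma realization_near v w : v != w -> e v w <-> near (f v) (f w).
Proof. by move=> neq_vw; rewrite (f_real neq_vw) Rmax_abs_le1. Qed.

Lemma realization_inj : twin_free e -> injective f.
Proof.
move=> tfree v w Efvw; case: (eqVneq v w) => [// | neq_vw].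
have adj_vw : e v w by apply/(realization_near neq_vw); rewrite Efvw /near; lra.
have adj_wv : e w v by apply/realization_near; rewrite 1?eq_sym // Efvw /near; lra.
apply: tfree; apply/setP => z; rewrite !inE.
case: (eqVneq z v) => [-> | neq_zv] /=; first by rewrite adj_wv orbT.
case: (eqVneq z w) => [-> | neq_zw] /=; first by rewrite adj_vw.
have [neq_vz neq_wz] : v != z /\ w != z by split; rewrite eq_sym.
apply/idP/idP => adj.
- by apply/(realization_near neq_wz); rewrite -Efvw; apply/realization_near.
- by apply/(realization_near neq_vz); rewrite Efvw; apply/realization_near.
Qed.

Lemma realization_orientation_unique (X : {set T}) b b' : twin_free e -> 1 < #|X| ->
  is_orientation f X b -> is_orientation f X b' -> b = b'.
Proof.
move=> tfree /card_gt1P[v [w [vX wX /eqP neq_vw]]] ori ori'.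
apply: NNPP => neq_bb'; apply: neq_vw; apply: (realization_inj tfree).
exact: (orientation_opp_eq ori ori' neq_bb' vX wX).
Qed.

End Realization.

Section CliqueStable.
Variable P : {set {set T}}.
Hypothesis P_cs : clique_stable e P.

Lemma clique_stable_card_nbhs X Y x x' : X \in P -> Y \in P -> x \in X -> x' \in X ->
  #|nbhs_in Y x| = #|nbhs_in Y x'|.
Proof.
have [_ [Pst [[_ Pst_stable _ _] Pst_V]]] := P_cs.
have inl_Pst Z : Z \in P -> inl_block Z \in Pst.
  by move=> ZP; move: (imset_f (@inl_block T) ZP); rewrite -Pst_V inE => /andP[].
have inl_nbhs Z v : [set u in inl_block Z | starE e (inl v) u] = inl @: nbhs_in Z v.
  apply/setP => -[z | C]; rewrite !inE /=.
    by rewrite !(mem_imset _ _ (@inl_inj _ _)) inE.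
  by apply/idP/idP => [/andP[] | ] /imsetP[].
move=> XP YP xX x'X.
have := Pst_stable _ _ (inl_Pst _ XP) (inl_Pst _ YP) (inl x) (inl x').
by rewrite !inl_nbhs !card_imset; [apply; apply: imset_f | exact: inl_inj ..].
Qed.

Lemma clique_stable_cover w : exists2 Y, Y \in P & w \in Y.
Proof.
have [[/and3P[/eqP coverP _ _] _] _] := P_cs.
by apply/bigcupP; rewrite -/(cover P) coverP inE.
Qed.

Lemma clique_stable_neq X Y x y :
  X \in P -> Y \in P -> X != Y -> x \in X -> y \in Y -> x != y.
Proof.
have [[/and3P[_ /trivIsetP disjP _] _] _] := P_cs.
move=> XP YP neqXY xX yY; apply: contraTneq yY => <-.
by rewrite (disjointFr (disjP _ _ XP YP neqXY) xX).
Qed.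

Lemma clique_stable_adj X x x' : X \in P -> x \in X -> x' \in X -> x != x' -> e x x'.
Proof.
have [[_ cliqueP] _] := P_cs; move=> XP xX x'X.
by move: XP => /cliqueP/forall_inP/(_ _ xX)/forall_inP/(_ _ x'X)/implyP.
Qed.

Lemma clique_stable_nbhs_eq X Y x x' : X \in P -> Y \in P -> x \in X -> x' \in X ->
  nbhs_in Y x \subset nbhs_in Y x' -> nbhs_in Y x = nbhs_in Y x'.
Proof.
move=> XP YP xX x'X sub; apply/eqP.
by rewrite eqEcard sub (clique_stable_card_nbhs XP YP x'X xX) leqnn.
Qed.

Lemma clique_stable_separate X x x' : twin_free e -> X \in P -> x \in X -> x' \in X ->
  (forall Y, Y \in P -> Y != X -> nbhs_in Y x = nbhs_in Y x') -> x = x'.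
Proof.
move=> tfree XP xX x'X same_nbhs; case: (eqVneq x x') => [// | neq_xx'].
apply: tfree; apply/setP => w; rewrite !inE.
case: (boolP (w \in X)) => wX.
  case: (eqVneq w x) => [-> | neq_wx] /=.
    by rewrite (clique_stable_adj XP x'X xX) ?orbT 1?eq_sym.
  case: (eqVneq w x') => [-> | neq_wx'] /=; first by rewrite (clique_stable_adj XP xX x'X).
  by rewrite !(clique_stable_adj XP _ wX) // eq_sym.
have [Y YP wY] := clique_stable_cover w.
have neqYX : Y != X by apply: contraNneq wX => <-.
have [neq_wx neq_wx'] : w != x /\ w != x' by split; apply: contraNneq wX => ->.
have /setP/(_ w) := same_nbhs Y YP neqYX.
by rewrite !inE wY (negbTE neq_wx) (negbTE neq_wx').
Qed.

Lemma clique_stable_separator X x x' : twin_free e -> X \in P -> x \in X -> x' \in X ->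
  x != x' -> exists Y, [/\ Y \in P, Y != X & nbhs_in Y x <> nbhs_in Y x'].
Proof.
move=> tfree XP xX x'X /eqP neq_xx'; apply: NNPP => no_sep; apply: neq_xx'.
apply: (clique_stable_separate tfree XP xX x'X) => Y YP neqYX.
by apply: NNPP => neq_nbhs; apply: no_sep; exists Y.
Qed.

Lemma clique_stable_homogeneous X Y : symmetric e -> X \in P -> Y \in P ->
  {in X &, forall x x', nbhs_in Y x = nbhs_in Y x'} ->
  (forall x y, x \in X -> y \in Y -> e x y) \/ (forall x y, x \in X -> y \in Y -> ~~ e x y).
Proof.
move=> e_sym XP YP same_nbhs.
case: (set_0Vmem X) => [-> | [x0 x0X]]; first by left => x y; rewrite inE.
have adjE x y : x \in X -> y \in Y -> e x y = e x0 y.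
  by move=> xX yY; move/setP/(_ y): (same_nbhs _ _ x0X xX); rewrite !inE yY /= => ->.
case: (boolP [forall y in Y, e x0 y]) => [/forall_inP adj0 | /forall_inPn[y0 y0Y nadj0]].
  by left => x y xX yY; rewrite adjE // adj0.
right => x y xX yY; apply/negP => adj.
have full : nbhs_in X y = X.
  by apply/setP => x'; rewrite inE andb_idr // => x'X; rewrite e_sym adjE // -(adjE _ _ xX yY).
have empty : nbhs_in X y0 = set0.
  by apply/setP => x'; rewrite !inE; apply/negP => /andP[x'X]; rewrite e_sym adjE // (negbTE nadj0).
have := clique_stable_card_nbhs YP XP yY y0Y; rewrite full empty cards0.
by move/eqP; rewrite cards_eq0 => /eqP X0; rewrite X0 inE in x0X.
Qed.

Section Blocks.
Variable f : T -> R * R.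
Hypothesis f_real : realization e f.
Local Open Scope R_scope.

Definition comparable_twins (b : R) (X Y : {set T}) : Prop :=
  {in X &, forall x x', comparable b (f x) (f x') -> nbhs_in Y x = nbhs_in Y x'}.

Lemma block_near X x x' : X \in P -> x \in X -> x' \in X -> near (f x) (f x').
Proof.
move=> XP xX x'X; case: (eqVneq x x') => [-> | neq_xx']; first by rewrite /near; lra.
exact/(realization_near f_real neq_xx')/(clique_stable_adj XP).
Qed.

Lemma nbhs_eq_of_near X Y x x' : X \in P -> Y \in P -> X != Y -> x \in X -> x' \in X ->
  {in Y, forall y, near (f x) (f y) -> near (f x') (f y)} -> nbhs_in Y x = nbhs_in Y x'.
Proof.
move=> XP YP neqXY xX x'X near_to; apply: (clique_stable_nbhs_eq XP YP xX x'X).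
apply/subsetP => y; rewrite !inE => /andP[yY adj]; rewrite yY.
have neq y' : y' \in X -> y' != y := fun y'X => clique_stable_neq XP YP neqXY y'X yY.
apply/(realization_near f_real (neq _ x'X)); apply: near_to => //.
exact/(realization_near f_real (neq _ xX)).
Qed.

Lemma ordered_nbhs_eq X Y s1 s2 x x' :
  X \in P -> Y \in P -> X != Y -> unit_sign s1 -> unit_sign s2 ->
  {in X & Y, forall z w, s1 * ((f z).1 - (f w).1) <= 1} ->
  {in X & Y, forall z w, s2 * ((f z).2 - (f w).2) <= 1} ->
  x \in X -> x' \in X -> ordered (s1 * s2) (f x) (f x') -> nbhs_in Y x = nbhs_in Y x'.
Proof.
move=> XP YP neqXY [] -> sign2 side1 side2 xX x'X [le1 le2].
- apply: (nbhs_eq_of_near XP YP neqXY xX x'X) => y yY.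
  have := side1 _ _ x'X yY; have := side2 _ _ x'X yY.
  by rewrite /near; case: sign2 le2 => ->; lra.
- symmetry; apply: (nbhs_eq_of_near XP YP neqXY x'X xX) => y yY.
  have := side1 _ _ xX yY; have := side2 _ _ xX yY.
  by rewrite /near; case: sign2 le2 => ->; lra.
Qed.

(* In each coordinate one block lies below the other up to 1 ([unit_sign_side]); moving a vertex
   up in the direction given by the two signs then never loses a neighbour in the other block. *)
Lemma blocks_comparable_twins X Y : X \in P -> Y \in P -> X != Y ->
  exists2 b, unit_sign b & comparable_twins b X Y /\ comparable_twins b Y X.
Proof.
move=> XP YP neqXY; have neqYX : Y != X by rewrite eq_sym.
have diam1 Z : Z \in P -> {in Z &, forall z z', (f z).1 - (f z').1 <= 1}.
  by move=> ZP z z' zZ z'Z; have := block_near ZP zZ z'Z; rewrite /near; lra.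
have diam2 Z : Z \in P -> {in Z &, forall z z', (f z).2 - (f z').2 <= 1}.
  by move=> ZP z z' zZ z'Z; have := block_near ZP zZ z'Z; rewrite /near; lra.
have [s1 sign1 side1] := unit_sign_side (diam1 X XP) (diam1 Y YP).
have [s2 sign2 side2] := unit_sign_side (diam2 X XP) (diam2 Y YP).
have side1' : {in Y & X, forall z w, - s1 * ((f z).1 - (f w).1) <= 1}.
  by move=> z w zY wX; have := side1 _ _ wX zY; lra.
have side2' : {in Y & X, forall z w, - s2 * ((f z).2 - (f w).2) <= 1}.
  by move=> z w zY wX; have := side2 _ _ wX zY; lra.
exists (s1 * s2); first by case: sign1 sign2 => -> [] ->; [left | right | right | left]; lra.
have twinsX := ordered_nbhs_eq XP YP neqXY sign1 sign2 side1 side2.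
have twinsY := ordered_nbhs_eq YP XP neqYX (unit_signN sign1) (unit_signN sign2) side1' side2'.
rewrite Rmult_opp_opp in twinsY.
by split=> z z' zZ z'Z [ord | ord]; [exact: twinsX | symmetry; exact: twinsX
                                   | exact: twinsY | symmetry; exact: twinsY].
Qed.

Hypothesis e_tfree : twin_free e.

Lemma comparable_both_signs_eq X x x' : X \in P -> x \in X -> x' \in X ->
  comparable R1 (f x) (f x') -> comparable (- R1) (f x) (f x') -> x = x'.
Proof.
move=> XP xX x'X cmp cmp'; apply: (clique_stable_separate e_tfree XP xX x'X) => Y YP neqYX.
have neqXY : X != Y by rewrite eq_sym.
by have [b [] -> [twins _]] := blocks_comparable_twins XP YP neqXY; exact: twins.
Qed.

(* A block separating q from q' satisfies [comparable_twins b]; if x were b-comparable to both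
   q and q' it would not separate them, so every x of X is (-b)-comparable to q or to q'. *)
Lemma twins_of_incomparable X Y b q q' : X \in P -> Y \in P -> unit_sign b ->
  q \in X -> q' \in X -> ~ comparable b (f q) (f q') -> comparable_twins (- b) X Y ->
  {in X &, forall x x', nbhs_in Y x = nbhs_in Y x'}.
Proof.
move=> XP YP sign_b qX q'X ncmp twinsY.
have cmp_opp : comparable (- b) (f q) (f q') by case: (comparable_or_opp b (f q) (f q')).
have neq_qq' : q != q' by apply/eqP => Eqq'; apply: ncmp; rewrite Eqq'; apply: comparable_refl.
have [Y0 [Y0P neqY0X sep0]] := clique_stable_separator e_tfree XP qX q'X neq_qq'.
have twins0 : comparable_twins b X Y0.
  have neqXY0 : X != Y0 by rewrite eq_sym.
  have [b0 sign_b0 [twins0 _]] := blocks_comparable_twins XP Y0P neqXY0.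
  have [Eb0 | Eb0] := unit_sign_either sign_b0 sign_b (unit_signN sign_b) (unit_sign_neqN sign_b).
    by rewrite -Eb0.
  by exfalso; apply: sep0; apply: twins0; rewrite // Eb0.
have nbhs_q x : x \in X -> nbhs_in Y x = nbhs_in Y q.
  move=> xX; case: (comparable_or_opp b (f x) (f q)) => cmp_xq; last exact: twinsY.
  case: (comparable_or_opp b (f x) (f q')) => cmp_xq'.
    by exfalso; apply: sep0; rewrite -(twins0 _ _ xX qX cmp_xq) (twins0 _ _ xX q'X cmp_xq').
  by rewrite (twinsY _ _ xX q'X cmp_xq') (twinsY _ _ qX q'X cmp_opp).
by move=> x x' xX x'X; rewrite !nbhs_q.
Qed.

Lemma block_orientation_exists X : X \in P -> exists b, is_orientation f X b.
Proof.
move=> XP; have both := comparable_both_signs_eq XP.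
case: (classic (exists q q', [/\ q \in X, q' \in X & ~ comparable R1 (f q) (f q')]))
  => [[q [q' [qX q'X ncmp_q]]] | all_cmp]; last first.
  have cmp x x' : x \in X -> x' \in X -> comparable R1 (f x) (f x').
    by move=> xX x'X; apply: NNPP => ncmp; apply: all_cmp; exists x, x'.
  exists R1; apply: comparable_orientation; first by left.
    exact: cmp.
  by move=> x x' xX x'X; apply/both/cmp.
case: (classic (exists p p', [/\ p \in X, p' \in X & ~ comparable (- R1) (f p) (f p')]))
  => [[p [p' [pX p'X ncmp_p]]] | all_cmp]; last first.
  have cmp x x' : x \in X -> x' \in X -> comparable (- R1) (f x) (f x').
    by move=> xX x'X; apply: NNPP => ncmp; apply: all_cmp; exists x, x'.
  exists (- R1); apply: comparable_orientation; first by right.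
    exact: cmp.
  by rewrite Ropp_involutive => x x' xX x'X cmp1; apply: both cmp1 (cmp _ _ xX x'X).
exfalso; have cmp_p : comparable R1 (f p) (f p').
  by case: (comparable_or_opp (- R1) (f p) (f p')); rewrite ?Ropp_involutive.
have neq_pp' : p != p' by apply/eqP => Epp'; apply: ncmp_p; rewrite Epp'; apply: comparable_refl.
have [Y [YP neqYX sep]] := clique_stable_separator e_tfree XP pX p'X neq_pp'.
have neqXY : X != Y by rewrite eq_sym.
have [b [] Eb [twins _]] := blocks_comparable_twins XP YP neqXY; apply: sep.
  by apply: twins; rewrite ?Eb.
have sign1 : unit_sign R1 by left.
by apply: (twins_of_incomparable XP YP sign1 qX q'X ncmp_q); rewrite -?Eb.
Qed.

Lemma opposite_orientations_homogeneous X Y bX bY : symmetric e ->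
  X \in P -> Y \in P -> ori_spec f X bX -> ori_spec f Y bY -> bX <> bY ->
  (forall x y, x \in X -> y \in Y -> e x y) \/ (forall x y, x \in X -> y \in Y -> ~~ e x y).
Proof.
move=> e_sym XP YP [oriX oriX1] [oriY oriY1] neq_bXY.
case: (eqVneq X Y) => [EXY | neqXY].
  exfalso; apply: neq_bXY; move: oriY oriY1; rewrite -EXY => oriY oriY1.
  have [X_le1 | X_gt1] := leqP #|X| 1; first by rewrite oriX1 ?oriY1.
  exact: (realization_orientation_unique f_real e_tfree X_gt1 oriX oriY).
have [b sign_b [twinsXY twinsYX]] := blocks_comparable_twins XP YP neqXY.
have [Eb | Eb] := unit_sign_either sign_b oriX.1 oriY.1 neq_bXY.
  apply: (clique_stable_homogeneous e_sym XP YP) => x x' xX x'X.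
  by apply: twinsXY; rewrite // Eb; apply: orientation_comparable oriX xX x'X.
have : {in Y &, forall y y', nbhs_in X y = nbhs_in X y'}.
  by move=> y y' yY y'Y; apply: twinsYX; rewrite // Eb; apply: orientation_comparable oriY yY y'Y.
case/(clique_stable_homogeneous e_sym YP XP) => [adj | nadj].
  by left => x y xX yY; rewrite e_sym adj.
by right => x y xX yY; rewrite e_sym nadj.
Qed.

End Blocks.

Section SameOrientation.
Variable f : T -> R * R.
Hypothesis f_real : realization e f.

Section SortedBlocks.
Variables (X Y : {set T}) (b : R) (s t : nat) (xn yn : nat -> T).
Hypotheses (XP : X \in P) (YP : Y \in P) (neqXY : X != Y) (sign_b : unit_sign b).
Hypotheses (xn_in : forall a, a < s -> xn a \in X) (yn_in : forall c, c < t -> yn c \in Y).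
Hypothesis xn_sorted : forall a a', a <= a' -> a' < s -> ordered b (f (xn a)) (f (xn a')).
Hypothesis yn_sorted : forall c c', c <= c' -> c' < t -> ordered b (f (yn c)) (f (yn c')).

Lemma sorted_adj_near a c : a < s -> c < t -> e (xn a) (yn c) <-> near (f (xn a)) (f (yn c)).
Proof.
move=> ltas ltct.
exact: realization_near (clique_stable_neq XP YP neqXY (xn_in ltas) (yn_in ltct)).
Qed.

Lemma sorted_blocks_corner a a' c c' : a <= a' -> a' < s -> c <= c' -> c' < t ->
  e (xn a) (yn c') -> e (xn a') (yn c) -> e (xn a) (yn c).
Proof.
move=> le_aa' lta's le_cc' ltc't /sorted_adj_near near1 /sorted_adj_near near2.
have ltas := leq_ltn_trans le_aa' lta's; have ltct := leq_ltn_trans le_cc' ltc't.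
apply/sorted_adj_near => //.
apply: (near_corner sign_b (xn_sorted le_aa' lta's) (yn_sorted le_cc' ltc't)).
  exact: near1.
exact: near2.
Qed.

Lemma sorted_blocks_row_convex a c c' c'' : a < s -> c <= c' <= c'' -> c'' < t ->
  e (xn a) (yn c) -> e (xn a) (yn c'') -> e (xn a) (yn c').
Proof.
move=> ltas /andP[le_cc' le_c'c''] ltc''t /sorted_adj_near near1 /sorted_adj_near near2.
have ltc't := leq_ltn_trans le_c'c'' ltc''t; have ltct := leq_ltn_trans le_cc' ltc't.
apply/sorted_adj_near => //.
apply: (near_convex sign_b (yn_sorted le_cc' ltc't) (yn_sorted le_c'c'' ltc''t)).
  exact: near1.
exact: near2.
Qed.

End SortedBlocks.

Lemma same_orientation_adj (X Y : {set T}) (b : R) :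
  symmetric e -> X \in P -> Y \in P -> X != Y ->
  is_orientation f X b -> is_orientation f Y b -> 0 < #|edge_set X Y| ->
  forall (xs : 'I_#|X| -> T) (ys : 'I_#|Y| -> T),
  injective xs -> (forall i, xs i \in X) ->
  (forall i i' : 'I_#|X|, nat_of_ord i' = (nat_of_ord i).+1 -> ((f (xs i)).1 <= (f (xs i')).1)%R) ->
  injective ys -> (forall j, ys j \in Y) ->
  (forall j j' : 'I_#|Y|, nat_of_ord j' = (nat_of_ord j).+1 -> ((f (ys j)).1 <= (f (ys j')).1)%R) ->
  forall (i : 'I_#|X|) (j : 'I_#|Y|),
    e (xs i) (ys j) <->
    ceil_div (i.+1 * #|Y|) #|edge_set X Y| = ceil_div (j.+1 * #|X|) #|edge_set X Y|.
Proof.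
move=> e_sym XP YP neqXY oriX oriY edges_gt0 xs ys xs_inj xs_in xs_step ys_inj ys_in ys_step i j.
have [[x0 y0]] := card_gt0P edges_gt0; rewrite in_edge_set => /and3P[x0X y0Y _].
set dX := #|nbhs_in Y x0|; set dY := #|nbhs_in X y0|.
have degX : {in X, forall x, #|nbhs_in Y x| = dX}.
  by move=> x xX; apply: clique_stable_card_nbhs xX x0X.
have degY : {in Y, forall y, #|nbhs_in X y| = dY}.
  by move=> y yY; apply: clique_stable_card_nbhs yY y0Y.
have cardX := card_edge_set_rows degX; have cardY := card_edge_set_cols e_sym degY.
have dX_gt0 : 0 < dX by move: edges_gt0; rewrite cardX muln_gt0 => /andP[].
have dY_gt0 : 0 < dY by move: edges_gt0; rewrite cardY muln_gt0 => /andP[].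
pose xn := ext_ord xs x0; pose yn := ext_ord ys y0.
have xn_in := ext_ord_mem x0 xs_in; have yn_in := ext_ord_mem y0 ys_in.
have staircaseE : forall a c, a < #|X| -> c < #|Y| -> e (xn a) (yn c) = (a %/ dY == c %/ dX).
  apply: staircase => //.
  - by move=> a' lta'X; rewrite -(degX _ (xn_in a' lta'X)) (card_ext_ord y0 ys_inj ys_in).
  - move=> c' ltc'Y; rewrite -(degY _ (yn_in c' ltc'Y)) (card_ext_ord x0 xs_inj xs_in).
    by apply: eq_count => a'; rewrite /= e_sym.
  - exact: (sorted_blocks_corner XP YP neqXY oriX.1 xn_in yn_in
              (ext_ord_ordered x0 xs_in oriX xs_step) (ext_ord_ordered y0 ys_in oriY ys_step)).
  - exact: (sorted_blocks_row_convex XP YP neqXY oriX.1 xn_in yn_in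
              (ext_ord_ordered y0 ys_in oriY ys_step)).
have X_gt0 : 0 < #|X| by apply/card_gt0P; exists x0.
have Y_gt0 : 0 < #|Y| by apply/card_gt0P; exists y0.
rewrite {1}cardY {1}cardX !ceil_div_mul // -(ext_ordE xs x0 i) -(ext_ordE ys y0 j).
by rewrite staircaseE //; split=> [/eqP -> | [->]].
Qed.

End SameOrientation.

End CliqueStable.
End Graph.

Theorem mainTheorem14 (T : finType) (e : rel T) (P : {set {set T}})
    (f : T -> (R * R)%type) :
  simple_graph e -> twin_free e -> clique_stable e P -> realization e f ->
  (forall X, X \in P -> exists b, is_orientation f X b) /\
  (forall X, X \in P -> 1 < #|X| ->
     forall b b', is_orientation f X b -> is_orientation f X b' -> b = b') /\
  (forall X Y bX bY, X \in P -> Y \in P -> ori_spec f X bX -> ori_spec f Y bY ->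
     bX <> bY ->
     (forall x y, x \in X -> y \in Y -> e x y) \/
     (forall x y, x \in X -> y \in Y -> ~~ e x y)) /\
  (forall X Y b, X \in P -> Y \in P -> X != Y -> ori_spec f X b -> ori_spec f Y b ->
     1 <= #|[set p : T * T | [&& p.1 \in X, p.2 \in Y & e p.1 p.2]]| ->
     forall (xs : 'I_#|X| -> T) (ys : 'I_#|Y| -> T),
       injective xs -> (forall i, xs i \in X) ->
       (forall i i' : 'I_#|X|, nat_of_ord i' = (nat_of_ord i).+1 ->
          Rle (f (xs i)).1 (f (xs i')).1) ->
       injective ys -> (forall j, ys j \in Y) ->
       (forall j j' : 'I_#|Y|, nat_of_ord j' = (nat_of_ord j).+1 ->
          Rle (f (ys j)).1 (f (ys j')).1) ->
       forall (i : 'I_#|X|) (j : 'I_#|Y|),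
         e (xs i) (ys j) <->
         ceil_div (i.+1 * #|Y|) #|[set p : T * T | [&& p.1 \in X, p.2 \in Y & e p.1 p.2]]|
         = ceil_div (j.+1 * #|X|) #|[set p : T * T | [&& p.1 \in X, p.2 \in Y & e p.1 p.2]]|).
Proof.
move=> [e_sym _] tfree P_cs f_real; split; last split; last split.
- by move=> X XP; apply: (block_orientation_exists P_cs f_real tfree XP).
- by move=> X _ X_gt1 b b'; apply: (realization_orientation_unique f_real tfree X_gt1).
- move=> X Y bX bY XP YP.
  exact: (opposite_orientations_homogeneous P_cs f_real tfree e_sym XP YP).
- move=> X Y b XP YP neqXY [oriX _] [oriY _].
  exact: (same_orientation_adj P_cs f_real e_sym XP YP neqXY oriX oriY).
Qed.
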